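(* Let $K>0$, $K\neq 1$, and let \[ A_6=\begin{pmatrix} K & K & 1\\ K & 1 & 1\\ 1 & 1 & 1\end{pmatrix}. \] Then $S(A_6)=XA_6X$ with $X=\operatorname{diag}(x,y,z)$, \[ y=\frac{1}{\sqrt{1+K^{1/3}+K^{2/3}}},\quad x=\frac{y}{K^{1/3}},\quad z=K^{1/3}y, \] and $S(A_6)$ is the circulant-type matrix \[ S(A_6)=\begin{pmatrix} a & b & c\\ b & c & a\\ c & a & b\end{pmatrix},\qquad a=\frac{K^{2/3}-K^{1/3}}{K-1},\quad b=\frac{K-K^{2/3}}{K-1},\quad c=\frac{K^{1/3}-1}{K-1}. \] Consequently, if $A_6^{(\ell)}=(a^{(\ell)}_{i,j})$ denotes the $\ell$th matrix of the alternate minimization sequence starting from $A_6$, then $\lim_{\ell\to\infty}\bigl((K-1)a^{(\ell)}_{1,3}+1\bigr)=K^{1/3}$, and similarly with $a^{(\ell)}_{2,2}$ or $a^{(\ell)}_{3,1}$ in place of $a^{(\ell)}_{1,3}$; for rational $K$ this gives sequences of rational numbers converging to $K^{1/3}$. Also $\lim_{K\to\infty}S(A_6)=\begin{pmatrix} 0&1&0\\1&0&0\\0&0&1\end{pmatrix}$.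
   Context: For a positive $n\times n$ matrix $A$, the Sinkhorn limit $S(A)$ is the unique doubly stochastic matrix of the form $XAY$ with $X,Y$ positive diagonal matrices; it is the limit of the alternate minimization sequence obtained from $A$ by alternately row scaling (dividing each row by its row sum) and column scaling (dividing each column by its column sum). For a positive symmetric matrix $A$ there is a unique positive diagonal $X$ with $S(A)=XAX$. *)

From HB Require Import structures.
From mathcomp Require Import all_boot all_order all_algebra.
From mathcomp Require Import all_classical all_reals all_analysis.
Set Implicit Arguments. Unset Strict Implicit. Unset Printing Implicit Defensive.
Import Order.TTheory GRing.Theory Num.Theory.
Local Open Scope classical_set_scope.
Local Open Scope ring_scope.

Section Sinkhorn.
Variable R : realType.

(* indices 1,2,3 of the paper are i0,i1,i2 *)
Definition i0 : 'I_3 := @Ordinal 3 0 isT.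
Definition i1 : 'I_3 := @Ordinal 3 1 isT.
Definition i2 : 'I_3 := @Ordinal 3 2 isT.

Definition mx3 (a b c d e f g h k : R) : 'M[R]_3 :=
  \matrix_(i < 3, j < 3)
     nth 0 (nth [::] [:: [:: a; b; c]; [:: d; e; f]; [:: g; h; k]] i) j.

Definition positive_mx n (A : 'M[R]_n) : Prop := forall i j, 0 < A i j.

Definition doubly_stochastic n (A : 'M[R]_n) : Prop :=
  (forall i j, 0 <= A i j) /\
  (forall i, \sum_j A i j = 1) /\ (forall j, \sum_i A i j = 1).

Definition pos_diag n (d : 'rV[R]_n) : Prop := forall i, 0 < d 0 i.

Definition sinkhorn_set n (A : 'M[R]_n) : set 'M[R]_n :=
  [set S | doubly_stochastic S /\
     exists dx dy : 'rV[R]_n, [/\ pos_diag dx, pos_diag dy &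
        S = diag_mx dx *m A *m diag_mx dy]].

(* Sinkhorn limit S(A): the (unique, for positive A) doubly stochastic
   matrix of the form X A Y *)
Definition sinkhorn n (A : 'M[R]_n) : 'M[R]_n := xget 0 (sinkhorn_set A).

Definition row_scale n (A : 'M[R]_n) : 'M[R]_n :=
  \matrix_(i, j) (A i j / \sum_k A i k).
Definition col_scale n (A : 'M[R]_n) : 'M[R]_n :=
  \matrix_(i, j) (A i j / \sum_k A k j).

(* alternate minimization sequence: A^(0) = A, A^(1) = row scaling of A,
   A^(2) = column scaling of A^(1), ... *)
Fixpoint altmin n (A : 'M[R]_n) (l : nat) : 'M[R]_n :=
  match l with
  | 0 => A
  | l'.+1 => if odd l' then col_scale (altmin A l') else row_scale (altmin A l')
  end.

Definition cbrt (K : R) : R := K `^ (3%:R)^-1.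

Definition A6 (K : R) : 'M[R]_3 := mx3 K K 1 K 1 1 1 1 1.

End Sinkhorn.

From HB Require Import structures.
From mathcomp Require Import all_boot all_order all_algebra.
From mathcomp Require Import all_classical all_reals all_analysis.
From mathcomp Require Import lra ring.
Import Order.TTheory GRing.Theory Num.Theory numFieldNormedType.Exports.
Local Open Scope classical_set_scope.
Local Open Scope ring_scope.

(* For a positive symmetric A and a positive u with u_i (A u)_i = 1, the matrix
   W = diag(u) A diag(u) is doubly stochastic, and it is the only doubly
   stochastic diagonal scaling of A: if (r_i W_ij s_j) is another one, the row
   maximizing r forces r_i s_j = 1.  The alternate minimization sequence is
   diag(v_{k+1}) A diag(v_k) (or its transpose) with v_{k+1} = 1 / (A v_k), so
   the ratios rho_k = v_k / u satisfy rho_{k+1} = 1 / (W rho_k).  Averaging with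
   weights at least d shrinks max rho / min rho - 1 by the factor 1 - 2d, hence
   the sequence converges geometrically to W.  For A6 with t^3 = K, the vector
   u = (y/t, y, t y) with y^2 (1 + t + t^2) = 1 works, and W_ij is the circulant
   t^((i+j+1) mod 3) / (1 + t + t^2), from which all the formulas follow. *)

Section DiagonalScaling.
Context {R : realType} {n : nat}.
Implicit Types (A P S : 'M[R]_n) (r s : 'I_n -> R).

Lemma diag_scale_mxE (dx dy : 'rV[R]_n) A i j :
  (diag_mx dx *m A *m diag_mx dy) i j = dx 0 i * A i j * dy 0 j.
Proof. by rewrite mul_mx_diag mul_diag_mx !mxE. Qed.

Lemma doubly_stochastic_rescale_trivial P r s :
  positive_mx P -> doubly_stochastic P ->
  (forall i, 0 < r i) -> (forall j, 0 < s j) ->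
  (forall i, \sum_j r i * P i j * s j = 1) ->
  (forall j, \sum_i r i * P i j * s j = 1) ->
  forall i j, r i * s j = 1.
Proof.
move=> P_gt0 [_ [Prow Pcol]] r_gt0 s_gt0 rPs_row rPs_col i j.
have [p _ r_max] := @arg_maxP _ R _ i xpredT r isT.
(* With [p] maximizing [r], each column gives [r p * s k >= 1], and row [p]
   then forces equality. *)
have rs_ge1 k : 1 <= r p * s k.
  rewrite -(rPs_col k) -[r p * s k]mul1r -(Pcol k) !mulr_suml.
  apply: ler_sum => l _.
  by rewrite mulrA ler_pM2r ?s_gt0 // mulrC ler_pM2l ?P_gt0 //; apply: r_max.
have rs_eq1 k : r p * s k = 1.
  have sum0 : \sum_l P p l * (r p * s l - 1) = 0.
    under eq_bigr do rewrite mulrBr mulr1.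
    rewrite sumrB Prow -(rPs_row p); apply/eqP; rewrite subr_eq0; apply/eqP.
    by apply: eq_bigr => l _; ring.
  have terms_ge0 l : true -> 0 <= P p l * (r p * s l - 1).
    by move=> _; apply: mulr_ge0; [exact: ltW | rewrite subr_ge0].
  have /eqP := psumr_eq0P terms_ge0 sum0 (i := k) isT.
  by rewrite mulf_eq0 (gt_eqF (P_gt0 p k)) subr_eq0 => /eqP.
have rp_neq0 : r p != 0 := lt0r_neq0 (r_gt0 p).
have s_eq k : s k = (r p)^-1.
  by apply: (mulfI rp_neq0); rewrite rs_eq1 mulfV.
have := rPs_row i; under eq_bigr do rewrite s_eq.
rewrite -mulr_suml -mulr_sumr Prow mulr1 => /(canRL (divfK rp_neq0)).
by rewrite mul1r s_eq => ->; rewrite mulfV.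
Qed.

Lemma sinkhorn_set_unique A S1 S2 : positive_mx A ->
  sinkhorn_set A S1 -> sinkhorn_set A S2 -> S1 = S2.
Proof.
move=> A_gt0 [S1_ds [dx1 [dy1 [x1_gt0 y1_gt0 S1E]]]].
move=> [[_ [S2_row S2_col]] [dx2 [dy2 [x2_gt0 y2_gt0 S2E]]]].
pose r i := dx2 0 i / dx1 0 i; pose s j := dy2 0 j / dy1 0 j.
have S1_gt0 : positive_mx S1.
  by move=> i j; rewrite S1E diag_scale_mxE !mulr_gt0.
have S2_rescale i j : S2 i j = r i * S1 i j * s j.
  rewrite S2E S1E !diag_scale_mxE /r /s.
  by field; rewrite !lt0r_neq0.
have rs1 := @doubly_stochastic_rescale_trivial S1 r s S1_gt0 S1_ds
  (fun i => divr_gt0 (x2_gt0 i) (x1_gt0 i)) (fun j => divr_gt0 (y2_gt0 j) (y1_gt0 j)).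
apply/matrixP => i j; rewrite S2_rescale mulrAC rs1 ?mul1r // => [k | k].
- by rewrite -(S2_row k); apply: eq_bigr => l _; rewrite S2_rescale.
- by rewrite -(S2_col k); apply: eq_bigr => l _; rewrite S2_rescale.
Qed.

Lemma sinkhornE A S : positive_mx A -> sinkhorn_set A S -> sinkhorn A = S.
Proof.
move=> A_gt0 SA; apply: xget_unique => // S' S'A.
exact: sinkhorn_set_unique S'A SA.
Qed.
End DiagonalScaling.

Section RatioBound.
Context {R : realFieldType} {n : nat}.
Implicit Types (rho w : 'I_n -> R) (W : 'I_n -> 'I_n -> R).

Definition ratio_bounded rho th := forall a b, rho a <= th * rho b.

Lemma ratio_bounded_exists rho :
  (forall j, 0 < rho j) -> exists th, ratio_bounded rho th.
Proof.
move=> rho_gt0; exists ((\sum_j rho j) * \sum_j (rho j)^-1) => a b.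
have le_sum (f : 'I_n -> R) k : (forall j, 0 <= f j) -> f k <= \sum_j f j.
  by move=> f_ge0; rewrite (bigD1 k) //= lerDl sumr_ge0.
rewrite -[rho a]mulr1 -mulrA; apply: ler_pM => //; first exact: ltW.
  by apply: le_sum => j; apply: ltW.
rewrite -ler_pdivrMr // mul1r; apply: le_sum => j.
by rewrite invr_ge0; apply: ltW.
Qed.

Lemma ratio_boundedV rho th : (forall j, 0 < rho j) ->
  ratio_bounded rho th -> ratio_bounded (fun j => (rho j)^-1) th.
Proof.
move=> rho_gt0 bnd a b.
by rewrite -[(rho a)^-1]mul1r ler_pdivrMr // mulrAC ler_pdivlMr // mul1r bnd.
Qed.

Lemma ratio_bounded_avg rho th w a : (forall j, 0 <= w j) -> \sum_j w j = 1 ->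
  ratio_bounded rho th ->
  rho a <= th * \sum_j w j * rho j /\ \sum_j w j * rho j <= th * rho a.
Proof.
move=> w_ge0 w_sum bnd; split.
- rewrite -[rho a]mul1r -w_sum mulr_suml mulr_sumr; apply: ler_sum => j _.
  by rewrite mulrCA; apply: ler_wpM2l.
- rewrite -[th * rho a]mul1r -w_sum mulr_suml; apply: ler_sum => j _.
  exact: ler_wpM2l.
Qed.

Lemma avg_ge_min_gap w d rho p q : 0 <= d -> (forall j, d <= w j) ->
  \sum_j w j = 1 -> (forall j, rho q <= rho j) ->
  rho q + d * (rho p - rho q) <= \sum_j w j * rho j.
Proof.
move=> d_ge0 w_ge w_sum rho_min.
have -> : \sum_j w j * rho j = rho q + \sum_j w j * (rho j - rho q).
  under [X in _ = _ + X]eq_bigr do rewrite mulrBr.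
  by rewrite sumrB -mulr_suml w_sum mul1r addrC subrK.
rewrite lerD2l (bigD1 p) //= -[X in X <= _]addr0; apply: lerD.
  by rewrite ler_wpM2r ?subr_ge0.
by apply: sumr_ge0 => j _; rewrite mulr_ge0 ?subr_ge0 // (le_trans d_ge0).
Qed.

(* Birkhoff's contraction of Hilbert's projective metric, in the form needed
   for averaging operators whose weights are all at least [d]. *)
Lemma ratio_bounded_stochastic W d rho th :
  0 <= d -> 2 * d <= 1 -> (forall i j, d <= W i j) -> (forall i, \sum_j W i j = 1) ->
  (forall j, 0 < rho j) -> ratio_bounded rho th ->
  ratio_bounded (fun i => \sum_j W i j * rho j) (1 + (1 - 2 * d) * (th - 1)).
Proof.
move=> d_ge0 d_le W_ge W_sum rho_gt0 bnd a b.
have [p _ rho_max] := @arg_maxP _ R _ a xpredT rho isT.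
have [q _ rho_min] := @arg_minP _ R _ a xpredT rho isT.
have lo := avg_ge_min_gap (W b) d rho p q d_ge0 (W_ge b) (W_sum b) (fun j => rho_min j isT).
have hi : \sum_j W a j * rho j <= rho p - d * (rho p - rho q).
  have := avg_ge_min_gap (W a) d (fun j => - rho j) q p d_ge0 (W_ge a) (W_sum a).
  under eq_bigr do rewrite mulrN.
  have rho_maxN j : - rho p <= - rho j by rewrite lerN2; apply: rho_max.
  by rewrite sumrN => /(_ rho_maxN); lra.
have th_ge1 : 1 <= th by rewrite -(ler_pM2r (rho_gt0 a)) mul1r bnd.
have Mm := bnd p q; have mM := rho_min p isT.
set c := 1 - 2 * d; have c_ge0 : 0 <= c by rewrite subr_ge0.
have th'_ge0 : 0 <= 1 + c * (th - 1) by rewrite addr_ge0 ?mulr_ge0 ?subr_ge0.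
have := ler_wpM2l th'_ge0 lo.
have : 0 <= c * (th - 1) * (d * (rho p - rho q)).
  by rewrite !mulr_ge0 ?subr_ge0.
have : 0 <= c * (th * rho q - rho p) by rewrite mulr_ge0 ?subr_ge0.
rewrite /c; nra.
Qed.

Lemma norm_div_sub1_le (x y th : R) : 0 < x -> 0 < y ->
  x <= th * y -> y <= th * x -> `|x / y - 1| <= th - 1.
Proof.
move=> x_gt0 y_gt0 xy yx; have q_gt0 : 0 < x / y by rewrite divr_gt0.
have q_le : x / y <= th by rewrite ler_pdivrMr.
have q_ge : 1 <= th * (x / y) by rewrite mulrA ler_pdivlMr // mul1r.
rewrite ler_norml; apply/andP; split; nra.
Qed.
End RatioBound.

Lemma cvg_geometric_bound (R : realType) (f : nat -> R) L q C : 0 <= q < 1 ->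
  (forall l, `|f l - L| <= q ^+ l * C) -> f l @[l --> \oo] --> L.
Proof.
move=> /andP[q_ge0 q_lt1] f_bound.
have : q ^+ l * C @[l --> \oo] --> 0.
  rewrite -(mul0r C); apply: cvgM; last exact: cvg_cst.
  by apply: cvg_expr; rewrite ger0_norm.
move=> /cvgr0Pnorm_lt geo; apply/cvgrPdist_lt => e e_gt0.
near=> l; rewrite distrC; apply: le_lt_trans (f_bound l) (le_lt_trans (ler_norm _) _).
by near: l; exact: geo.
Unshelve. all: by end_near.
Qed.

Section SymmetricSinkhorn.
Context {R : realType} {n : nat} (A : 'M[R]_n) (u : 'I_n -> R).
Hypotheses (A_gt0 : positive_mx A) (A_sym : forall i j, A i j = A j i).
Hypotheses (u_gt0 : forall i, 0 < u i) (u_scales : forall i, u i * \sum_j A i j * u j = 1).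
Implicit Types (f g : 'I_n -> R).

Definition scaled_mx f g : 'M[R]_n := \matrix_(i, j) (f i * A i j * g j).

Lemma positive_mx_sum_gt0 f i : (forall j, 0 < f j) -> 0 < \sum_j A i j * f j.
Proof.
move=> f_gt0; rewrite (bigD1 i) //=; apply: ltr_pwDl; first exact: mulr_gt0.
by apply: sumr_ge0 => k _; apply: mulr_ge0; apply: ltW.
Qed.

Local Notation W i j := (u i * A i j * u j).

Lemma sym_scaling_gt0 i j : 0 < W i j.
Proof. by rewrite !mulr_gt0. Qed.

Lemma sym_scaling_row_sum i : \sum_j W i j = 1.
Proof. by rewrite -(u_scales i) mulr_sumr; apply: eq_bigr => j _; ring. Qed.

Lemma sinkhorn_sym_scaling :
  sinkhorn A = diag_mx (\row_i u i) *m A *m diag_mx (\row_i u i).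
Proof.
have XAXE i j : (diag_mx (\row_i u i) *m A *m diag_mx (\row_i u i)) i j = W i j.
  by rewrite diag_scale_mxE !mxE.
apply: sinkhornE => //; split; last first.
  by exists (\row_i u i), (\row_i u i); split => // i; rewrite mxE.
split; [|split] => [i j|i|j].
- by rewrite XAXE; exact: ltW (sym_scaling_gt0 i j).
- by rewrite -(sym_scaling_row_sum i); apply: eq_bigr => j _; rewrite XAXE.
- by rewrite -(sym_scaling_row_sum j); apply: eq_bigr => i _; rewrite XAXE A_sym; ring.
Qed.

Fixpoint sinkhorn_vec k : 'I_n -> R :=
  if k is k'.+1 then fun i => (\sum_j A i j * sinkhorn_vec k' j)^-1 else fun=> 1.

Lemma sinkhorn_vec_gt0 k i : 0 < sinkhorn_vec k i.
Proof. by elim: k i => [|k IH] i //=; rewrite invr_gt0 positive_mx_sum_gt0. Qed.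

Lemma row_scale_scaled f g : (forall i, 0 < f i) -> (forall j, 0 < g j) ->
  row_scale (scaled_mx f g) = scaled_mx (fun i => (\sum_k A i k * g k)^-1) g.
Proof.
move=> f_gt0 g_gt0; apply/matrixP => i j; rewrite !mxE.
have -> : \sum_k scaled_mx f g i k = f i * \sum_k A i k * g k.
  by rewrite mulr_sumr; apply: eq_bigr => k _; rewrite mxE mulrA.
by field; rewrite !lt0r_neq0 ?positive_mx_sum_gt0.
Qed.

Lemma col_scale_scaled f g : (forall i, 0 < f i) -> (forall j, 0 < g j) ->
  col_scale (scaled_mx f g) = scaled_mx f (fun j => (\sum_k A j k * f k)^-1).
Proof.
move=> f_gt0 g_gt0; apply/matrixP => i j; rewrite !mxE.
have -> : \sum_k scaled_mx f g k j = g j * \sum_k A j k * f k.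
  by rewrite mulr_sumr; apply: eq_bigr => k _; rewrite mxE A_sym; ring.
by field; rewrite !lt0r_neq0 ?positive_mx_sum_gt0.
Qed.

Lemma altminS l :
  altmin A l.+1 = if odd l then col_scale (altmin A l) else row_scale (altmin A l).
Proof. by []. Qed.

Lemma altmin_sym l : altmin A l.+1 =
  if odd l then scaled_mx (sinkhorn_vec l) (sinkhorn_vec l.+1)
  else scaled_mx (sinkhorn_vec l.+1) (sinkhorn_vec l).
Proof.
elim: l => [|l IH]; rewrite altminS.
  have A_scaled : A = scaled_mx (sinkhorn_vec 0) (sinkhorn_vec 0).
    by apply/matrixP => i j; rewrite mxE mulr1 mul1r.
  by rewrite /= {1}A_scaled; apply: row_scale_scaled.
by rewrite IH [odd l.+1]/=; case: (odd l);
  [apply: row_scale_scaled | apply: col_scale_scaled]; apply: sinkhorn_vec_gt0.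
Qed.

Definition sinkhorn_ratio k j := sinkhorn_vec k j / u j.

Lemma sinkhorn_ratio_gt0 k j : 0 < sinkhorn_ratio k j.
Proof. by rewrite divr_gt0 ?sinkhorn_vec_gt0. Qed.

Lemma sinkhorn_vecE k j : sinkhorn_vec k j = u j * sinkhorn_ratio k j.
Proof. by rewrite mulrC divfK ?lt0r_neq0. Qed.

Lemma sinkhorn_ratioS k i :
  sinkhorn_ratio k.+1 i = (\sum_j W i j * sinkhorn_ratio k j)^-1.
Proof.
have -> : \sum_j W i j * sinkhorn_ratio k j = u i * \sum_j A i j * sinkhorn_vec k j.
  by rewrite mulr_sumr; apply: eq_bigr => j _; rewrite sinkhorn_vecE; ring.
by rewrite invfM mulrC.
Qed.

(* Capped at [1/2] so that the contraction factor [rate] is nonnegative. *)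
Let wmin := \big[Num.min/2^-1]_(p : 'I_n * 'I_n) W p.1 p.2.
Let rate := 1 - 2 * wmin.

Lemma sym_scaling_ge_wmin i j : wmin <= W i j.
Proof. exact: (bigmin_le _ (i, j)). Qed.

Lemma wmin_bounds : 0 < wmin /\ 2 * wmin <= 1.
Proof.
split; first by apply/bigmin_gtP; split => [|p _]; rewrite ?invr_gt0 ?sym_scaling_gt0.
have : wmin <= 2^-1 by apply: bigmin_le_id.
lra.
Qed.

Lemma sinkhorn_ratio_geometric :
  exists th, forall k, ratio_bounded (sinkhorn_ratio k) (1 + rate ^+ k * (th - 1)).
Proof.
have [wmin_gt0 wmin_le] := wmin_bounds.
have [th bnd0] := ratio_bounded_exists _ (sinkhorn_ratio_gt0 0).
exists th; elim=> [|k IH]; first by rewrite expr0 mul1r addrC subrK.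
have avg_gt0 i : 0 < \sum_j W i j * sinkhorn_ratio k j.
  by rewrite -invr_gt0 -sinkhorn_ratioS sinkhorn_ratio_gt0.
have := ratio_boundedV _ _ avg_gt0 (ratio_bounded_stochastic _ _ _ _ (ltW wmin_gt0)
  wmin_le sym_scaling_ge_wmin sym_scaling_row_sum (sinkhorn_ratio_gt0 k) IH).
have -> : 1 + (1 - 2 * wmin) * (1 + rate ^+ k * (th - 1) - 1) = 1 + rate ^+ k.+1 * (th - 1).
  by rewrite exprS /rate; ring.
by move=> bnd a b; rewrite !sinkhorn_ratioS.
Qed.

Lemma scaled_mx_sinkhorn_vec_bound k a b th : ratio_bounded (sinkhorn_ratio k) th ->
  `|scaled_mx (sinkhorn_vec k.+1) (sinkhorn_vec k) a b - W a b| <= (th - 1) * W a b.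
Proof.
move=> bnd; set avg := \sum_j W a j * sinkhorn_ratio k j.
have avg_gt0 : 0 < avg by rewrite -invr_gt0 -sinkhorn_ratioS sinkhorn_ratio_gt0.
have [ub lb] := ratio_bounded_avg _ _ _ b (fun j => ltW (sym_scaling_gt0 a j))
  (sym_scaling_row_sum a) bnd.
have -> : scaled_mx (sinkhorn_vec k.+1) (sinkhorn_vec k) a b - W a b =
    W a b * (sinkhorn_ratio k b / avg - 1).
  by rewrite mxE !sinkhorn_vecE sinkhorn_ratioS -/avg; ring.
rewrite normrM (ger0_norm (ltW (sym_scaling_gt0 a b))) mulrC.
apply: ler_wpM2r; first exact: ltW (sym_scaling_gt0 a b).
exact: norm_div_sub1_le (sinkhorn_ratio_gt0 k b) avg_gt0 ub lb.
Qed.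

Lemma altmin_sym_cvg i j : altmin A l i j @[l --> \oo] --> u i * A i j * u j.
Proof.
have [wmin_gt0 wmin_le] := wmin_bounds.
have rate_bounds : 0 <= rate < 1 by apply/andP; split; rewrite /rate; lra.
have [th bnd] := sinkhorn_ratio_geometric.
rewrite -cvg_shiftS; apply: (@cvg_geometric_bound _ _ _ _ ((th - 1) * W i j) rate_bounds) => l.
have -> : rate ^+ l * ((th - 1) * W i j) = (1 + rate ^+ l * (th - 1) - 1) * W i j by ring.
rewrite [X in `|X - _|]/= -altminS altmin_sym.
case: (odd l); last exact: scaled_mx_sinkhorn_vec_bound.
have -> : scaled_mx (sinkhorn_vec l) (sinkhorn_vec l.+1) i j =
    scaled_mx (sinkhorn_vec l.+1) (sinkhorn_vec l) j i by rewrite !mxE A_sym; ring.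
have -> : W i j = W j i by rewrite A_sym; ring.
exact: scaled_mx_sinkhorn_vec_bound.
Qed.
End SymmetricSinkhorn.

Section A6Scaling.
Context {R : realType} {K t y : R}.
Hypotheses (t_gt0 : 0 < t) (t_cube : t ^+ 3 = K).
Hypotheses (y_gt0 : 0 < y) (y_sq : y ^+ 2 * (1 + t + t ^+ 2) = 1).
Local Notation s := (1 + t + t ^+ 2).
Local Notation u i := (nth 0 [:: y / t; y; t * y] i).

Let s_gt0 : 0 < s.
Proof. by rewrite !addr_gt0 ?exprn_gt0. Qed.

Lemma A6_gt0 : positive_mx (A6 K).
Proof.
have K_gt0 : 0 < K by rewrite -t_cube exprn_gt0.
by move=> i j; rewrite mxE; case: i => [[|[|[|?]]] ?]; case: j => [[|[|[|?]]] ?].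
Qed.

Lemma A6_sym i j : A6 K i j = A6 K j i.
Proof. by rewrite !mxE; case: i => [[|[|[|?]]] ?]; case: j => [[|[|[|?]]] ?]. Qed.

Lemma A6_weights_gt0 (i : 'I_3) : 0 < u i.
Proof.
by case: i => [[|[|[|?]]] ?] //=; [exact: divr_gt0 | exact: mulr_gt0].
Qed.

Lemma A6_scaledE (i j : 'I_3) : u i * A6 K i j * u j = t ^+ ((i + j).+1 %% 3) / s.
Proof.
have s_neq0 : s != 0 := lt0r_neq0 s_gt0.
have y2 : y ^+ 2 = s^-1 by apply: (mulIf s_neq0); rewrite y_sq mulVf.
have t_neq0 : t != 0 := lt0r_neq0 t_gt0.
rewrite -y2 mxE -t_cube.
by case: i => [[|[|[|?]]] ?] //; case: j => [[|[|[|?]]] ?] //=; field.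
Qed.

Lemma A6_weights_scale (i : 'I_3) : u i * \sum_j A6 K i j * u j = 1.
Proof.
rewrite mulr_sumr; under eq_bigr do rewrite mulrA A6_scaledE.
rewrite !big_ord_recr big_ord0 /= add0r.
have s_neq0 : s != 0 := lt0r_neq0 s_gt0.
by case: i => [[|[|[|?]]] ?] //=; field.
Qed.
End A6Scaling.

Section CubeRoot.
Context {R : realType}.
Implicit Types K : R.

Lemma cbrt_ge0 K : 0 <= cbrt K.
Proof. exact: powR_ge0. Qed.

Lemma cbrt_gt0 K : 0 < K -> 0 < cbrt K.
Proof. exact: powR_gt0. Qed.

Lemma cbrtK K : 0 <= K -> cbrt K ^+ 3 = K.
Proof.
by move=> K_ge0; rewrite /cbrt -powR_mulrn ?powR_ge0 // -powRrM mulVf ?powRr1.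
Qed.

Lemma cbrt_cvgy : @cbrt R K @[K --> +oo] --> +oo.
Proof.
apply/cvgryPge => M; have [M_le0|M_gt0] := leP M 0.
  by apply: nearW => K; exact: le_trans M_le0 (cbrt_ge0 K).
near=> K.
have K_ge : M ^+ 3 <= K by near: K; apply: nbhs_pinfty_ge; exact: num_real.
have K_ge0 : 0 <= K := le_trans (exprn_ge0 _ (ltW M_gt0)) K_ge.
by rewrite -(ler_pXn2r (isT : 0 < 3)%N) ?nnegrE ?cbrt_ge0 ?(ltW M_gt0) // cbrtK.
Unshelve. all: by end_near.
Qed.

Lemma cvg_cbrt_pow_div m : (m <= 2)%N ->
  @cbrt R K ^+ m / (1 + cbrt K + cbrt K ^+ 2) @[K --> +oo] --> ((m == 2)%:R : R).
Proof.
move=> m_le2.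
have cbrt_pos : \forall K \near +oo, 0 < @cbrt R K.
  by near=> K; apply: cbrt_gt0; near: K; apply: nbhs_pinfty_gt; exact: num_real.
have r_cvg0 : (@cbrt R K)^-1 @[K --> +oo] --> 0.
  exact: (gtr0_cvgV0 cbrt_pos).2 cbrt_cvgy.
have rX_cvg j : (@cbrt R K)^-1 ^+ j @[K --> +oo] --> (0 : R) ^+ j.
  exact: (continuous_cvg _ (@exprn_continuous R j 0)) r_cvg0.
(* Divide numerator and denominator by [cbrt K ^+ 2]. *)
have : (@cbrt R K)^-1 ^+ (2 - m) / ((cbrt K)^-1 ^+ 2 + (cbrt K)^-1 + 1)
    @[K --> +oo] --> (0 : R) ^+ (2 - m) / (0 ^+ 2 + 0 + 1).
  apply: cvgM; first exact: rX_cvg.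
  apply: cvgV; first by rewrite expr0n /= !add0r oner_neq0.
  by apply: cvgD; [apply: cvgD; [exact: rX_cvg | exact: r_cvg0] | exact: cvg_cst].
rewrite expr0n /= !add0r invr1 mulr1 expr0n subn_eq0 eqn_leq m_le2.
apply: cvg_trans; apply: near_eq_cvg; near=> K.
have t_gt0 : 0 < cbrt K by near: K; exact: cbrt_pos.
have s_neq0 : 1 + cbrt K + cbrt K ^+ 2 != 0 by rewrite lt0r_neq0 // !addr_gt0 ?exprn_gt0.
by case: m m_le2 => [|[|[|?]]] //= _; field; rewrite s_neq0 lt0r_neq0.
Unshelve. all: by end_near.
Qed.
End CubeRoot.

Lemma sqrtV_sqr_mul {R : realType} (x : R) : 0 < x -> (Num.sqrt x)^-1 ^+ 2 * x = 1.
Proof. by move=> x_gt0; rewrite exprVn (sqr_sqrtr (ltW x_gt0)) mulVf // lt0r_neq0. Qed.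

Section A6Sinkhorn.
Context {R : realType} (K : R).
Hypothesis K_gt0 : 0 < K.
Local Notation t := (cbrt K).
Local Notation s := (1 + t + t ^+ 2).
Local Notation y := (Num.sqrt s)^-1.

Let t_gt0 : 0 < t := cbrt_gt0 _ K_gt0.
Let t_cube : t ^+ 3 = K := cbrtK _ (ltW K_gt0).
Let s_gt0 : 0 < s.
Proof. by rewrite !addr_gt0 ?exprn_gt0. Qed.
Let y_gt0 : 0 < y.
Proof. by rewrite invr_gt0 sqrtr_gt0. Qed.
Let y_sq : y ^+ 2 * s = 1 := sqrtV_sqr_mul _ s_gt0.

Lemma sinkhorn_A6 : sinkhorn (A6 K) =
  diag_mx (\row_(i < 3) nth 0 [:: y / t; y; t * y] i) *m A6 K *m
  diag_mx (\row_(i < 3) nth 0 [:: y / t; y; t * y] i).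
Proof.
apply: sinkhorn_sym_scaling; first exact: A6_gt0 t_gt0 t_cube.
- exact: A6_sym.
- exact: A6_weights_gt0.
- exact: A6_weights_scale t_gt0 t_cube y_sq.
Qed.

Lemma sinkhorn_A6E i j : sinkhorn (A6 K) i j = t ^+ ((i + j).+1 %% 3) / s.
Proof. by rewrite sinkhorn_A6 diag_scale_mxE -(A6_scaledE t_gt0 t_cube y_sq) !mxE. Qed.

Lemma sinkhorn_A6_mx3 : K != 1 ->
  let a := (t ^+ 2 - t) / (K - 1) in
  let b := (K - t ^+ 2) / (K - 1) in
  let c := (t - 1) / (K - 1) in
  sinkhorn (A6 K) = mx3 a b c b c a c a b.
Proof.
move=> K_neq1 a b c; apply/matrixP => i j.
rewrite sinkhorn_A6E mxE /a /b /c.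
move: t_cube (lt0r_neq0 s_gt0); move: (cbrt K) => T T_cube s_neq0.
have T3_neq1 : T ^+ 3 - 1 != 0 by rewrite T_cube subr_eq0.
rewrite -T_cube.
by case: i => [[|[|[|?]]] ?] //; case: j => [[|[|[|?]]] ?] //=; field; rewrite T3_neq1 s_neq0.
Qed.

Lemma altmin_A6_cvg (i j : 'I_3) : (i + j = 2)%N ->
  ((K - 1) * altmin (A6 K) l i j + 1) @[l --> \oo] --> t.
Proof.
move=> ij2; have := altmin_sym_cvg _ _ (A6_gt0 t_gt0 t_cube) A6_sym
  (A6_weights_gt0 t_gt0 y_gt0) (A6_weights_scale t_gt0 t_cube y_sq) i j.
rewrite (A6_scaledE t_gt0 t_cube y_sq) ij2 modnn expr0 => altmin_cvg.
have K1 : K - 1 = (t - 1) * s by rewrite -[X in X - 1 = _]t_cube; ring.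
have -> : t = (K - 1) * (1 / s) + 1.
  by rewrite K1 mulrA mulr1 mulfK ?subrK // lt0r_neq0.
by apply: cvgD; [apply: cvgM; [exact: cvg_cst | exact: altmin_cvg] | exact: cvg_cst].
Qed.
End A6Sinkhorn.

Lemma sinkhorn_A6_cvgy {R : realType} (i j : 'I_3) :
  sinkhorn (A6 K) i j @[K --> +oo] --> (mx3 0 1 0 1 0 0 0 0 1 : 'M[R]_3) i j.
Proof.
have -> : (mx3 0 1 0 1 0 0 0 0 1 : 'M[R]_3) i j = ((i + j).+1 %% 3 == 2)%N%:R.
  by rewrite mxE; case: i => [[|[|[|?]]] ?] //; case: j => [[|[|[|?]]] ?].
have e_le2 : ((i + j).+1 %% 3 <= 2)%N by rewrite -ltnS ltn_pmod.
have sinkhorn_eq : {near +oo, (fun K : R => cbrt K ^+ ((i + j).+1 %% 3)%N /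
    (1 + cbrt K + cbrt K ^+ 2)) =1 (fun K => sinkhorn (A6 K) i j)}.
  near=> K; have K_gt0 : 0 < K by near: K; apply: nbhs_pinfty_gt; exact: num_real.
  by rewrite sinkhorn_A6E.
apply: cvg_trans (near_eq_cvg sinkhorn_eq) _.
exact: cvg_cbrt_pow_div.
Unshelve. all: by end_near.
Qed.

Theorem mainTheorem11 (R : realType) (K : R) (hK0 : 0 < K) (hK1 : K != 1) :
  let t := cbrt K in
  let y := (Num.sqrt (1 + t + t ^+ 2))^-1 in
  let x := y / t in
  let z := t * y in
  let X := diag_mx (\row_(i < 3) nth 0 [:: x; y; z] i) in
  let a := (t ^+ 2 - t) / (K - 1) in
  let b := (K - t ^+ 2) / (K - 1) in
  let c := (t - 1) / (K - 1) in
  (sinkhorn (A6 K) = X *m A6 K *m X) /\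
     (
      sinkhorn (A6 K) = mx3 a b c b c a c a b) /\
     (
      ((K - 1) * altmin (A6 K) l i0 i2 + 1) @[l --> \oo] --> (t : R)) /\
     (      ((K - 1) * altmin (A6 K) l i1 i1 + 1) @[l --> \oo] --> (t : R)) /\
     (      ((K - 1) * altmin (A6 K) l i2 i0 + 1) @[l --> \oo] --> (t : R)) /\
     (      forall i j : 'I_3,
        sinkhorn (A6 k) i j @[k --> +oo] --> (mx3 0 1 0 1 0 0 0 0 1 : 'M[R]_3) i j).
Proof.
move=> t y x z X a b c.
split; first exact: sinkhorn_A6.
split; first exact: sinkhorn_A6_mx3.
split; first exact: altmin_A6_cvg.
split; first exact: altmin_A6_cvg.
split; first exact: altmin_A6_cvg.
exact: sinkhorn_A6_cvgy.
Qed.
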